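(* Let $\Sigma$ be a Hamiltonian surface in the Brady complex $X$. Then for every vertex $x$ of $X$, the Hamiltonian cycle $\Sigma\cap L_x$ of the link $L_x$ contains precisely two rungs (edges labeled $\mathcal{L}$).
   Context: The Brady complex $X$ is the simply connected CAT(0) piecewise Euclidean 2-complex (constructed by T. Brady) on which $\mathrm{Aut}(F_2)$ acts properly and cocompactly by cellular isometries, transitively on vertices. Its closed 2-cells (faces) are unit equilateral triangles and unit lozenges (rhombi with angles $\pi/3$ and $2\pi/3$); every edge lies in exactly one triangle and two lozenges. The link $L_x$ of a vertex $x$ is the graph whose vertices are the edges of $X$ at $x$ and whose edges are the corners at $x$ of faces containing $x$; a link edge is labeled $t$ if it comes from a triangle, $\ell$ if from a lozenge corner of angle $\pi/3$, and $\mathcal{L}$ if from a lozenge corner of angle $2\pi/3$. Each labeled link $L_x$ is isomorphic to the Moebius ladder with vertices $u_0,\dots,u_3,w_0,\dots,w_3$, rungs $u_iw_i$ labeled $\mathcal{L}$, horizontal edges $u_0u_1,u_2u_3,w_0w_1,w_2w_3$ labeled $\ell$ and horizontal edges $u_1u_2,u_3w_0,w_1w_2,w_3u_0$ labeled $t$. A Hamiltonian surface in $X$ is a connected union $\Sigma$ of closed faces which is a surface without boundary, contains every vertex and every edge of $X$, and has no multiple vertex; for each vertex $x$, $\Sigma\cap L_x$ (the link edges given by corners of faces of $\Sigma$) is then a Hamiltonian cycle of $L_x$. *)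

From Stdlib Require Import Relations.
From mathcomp Require Import all_boot.
Set Implicit Arguments. Unset Strict Implicit. Unset Printing Implicit Defensive.

Inductive shape := Tri | Loz.
Definition nsides (s : shape) : nat := match s with Tri => 3 | Loz => 4 end.

(* lab_t = t (triangle corner), lab_l = small ell (lozenge corner of angle pi/3),
   lab_L = calligraphic L (lozenge corner of angle 2pi/3) *)
Inductive label := lab_t | lab_l | lab_L.

Inductive lvert := u0 | u1 | u2 | u3 | w0 | w1 | w2 | w3.
Inductive ledge :=
  | rung0 | rung1 | rung2 | rung3
  | hl0 | hl1 | hl2 | hl3
  | ht0 | ht1 | ht2 | ht3.

Definition ledge_ends (a : ledge) : lvert * lvert :=
  match a with
  | rung0 => (u0, w0) | rung1 => (u1, w1) | rung2 => (u2, w2) | rung3 => (u3, w3)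
  | hl0 => (u0, u1) | hl1 => (u2, u3) | hl2 => (w0, w1) | hl3 => (w2, w3)
  | ht0 => (u1, u2) | ht1 => (u3, w0) | ht2 => (w1, w2) | ht3 => (w3, u0)
  end.

Definition ledge_label (a : ledge) : label :=
  match a with
  | rung0 | rung1 | rung2 | rung3 => lab_L
  | hl0 | hl1 | hl2 | hl3 => lab_l
  | ht0 | ht1 | ht2 | ht3 => lab_t
  end.

(* Convention encoding the metric: in a
   lozenge the corners of even index have angle pi/3, those of odd index 2pi/3. *)
Record complex2 := Complex2 {
  vert : Type;
  edge : Type;
  face : Type;
  eend1 : edge -> vert;
  eend2 : edge -> vert;
  fshape : face -> shape;
  fvert : face -> nat -> vert;
  fedge : face -> nat -> edge
}.

Section Complex.
Variable X : complex2.

Definition fsize (f : face X) : nat := nsides (fshape f).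

Definition incident (e : edge X) (x : vert X) : Prop := eend1 e = x \/ eend2 e = x.

Definition joins (e : edge X) (x y : vert X) : Prop :=
  (eend1 e = x /\ eend2 e = y) \/ (eend1 e = y /\ eend2 e = x).

Definition well_formed : Prop :=
  (forall e : edge X, eend1 e <> eend2 e) /\
  (forall f i, i < fsize f -> joins (fedge f i) (fvert f i) (fvert f (i.+1 %% fsize f))) /\
  (forall f i j, i < fsize f -> j < fsize f -> fvert f i = fvert f j -> i = j) /\
  (forall f i j, i < fsize f -> j < fsize f -> fedge f i = fedge f j -> i = j).

Definition oedge := (edge X * bool)%type.
Definition osrc (d : oedge) : vert X := if d.2 then eend1 d.1 else eend2 d.1.
Definition otgt (d : oedge) : vert X := if d.2 then eend2 d.1 else eend1 d.1.
Definition oinv (d : oedge) : oedge := (d.1, ~~ d.2).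

Fixpoint is_path (x : vert X) (p : seq oedge) : Prop :=
  match p with
  | [::] => True
  | d :: p' => osrc d = x /\ is_path (otgt d) p'
  end.

Fixpoint endpt (x : vert X) (p : seq oedge) : vert X :=
  match p with
  | [::] => x
  | d :: p' => endpt (otgt d) p'
  end.

Definition face_word (f : face X) (r : seq oedge) : Prop :=
  size r = fsize f /\
  exists k, forall j d, onth r j = Some d ->
    d.1 = fedge f ((k + j) %% fsize f) /\ osrc d = fvert f ((k + j) %% fsize f).

Definition face_loop (f : face X) (r : seq oedge) : Prop :=
  face_word f r \/ face_word f (rev (map oinv r)).

Definition elementary_loop (r : seq oedge) (v : vert X) : Prop :=
  is_path v r /\ ((exists d, r = [:: d; oinv d]) \/ (exists f, face_loop f r)).

Definition hstep (x : vert X) (p q : seq oedge) : Prop :=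
  exists a b r, p = a ++ b /\ q = a ++ r ++ b /\ elementary_loop r (endpt x a).

Definition connected : Prop :=
  forall x y : vert X, exists p, is_path x p /\ endpt x p = y.

Definition simply_connected : Prop :=
  connected /\
  forall (x : vert X) (p : seq oedge), is_path x p -> endpt x p = x ->
    clos_refl_sym_trans _ (hstep x) p [::].

Definition corner_at (x : vert X) (f : face X) (i : nat) : Prop :=
  i < fsize f /\ fvert f i = x.

(* the two link vertices (edges at x) joined by the corner (f, i) *)
Definition corner_e1 (f : face X) (i : nat) : edge X :=
  fedge f ((i + fsize f).-1 %% fsize f).
Definition corner_e2 (f : face X) (i : nat) : edge X := fedge f i.

Definition corner_label (f : face X) (i : nat) : label :=
  match fshape f with
  | Tri => lab_t
  | Loz => if odd i then lab_L else lab_l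
  end.

Definition corner_joins (f : face X) (i : nat) (e e' : edge X) : Prop :=
  (corner_e1 f i = e /\ corner_e2 f i = e') \/ (corner_e1 f i = e' /\ corner_e2 f i = e).

Definition link_is_ladder (x : vert X) : Prop :=
  exists (phi : edge X -> lvert) (psi : face X -> nat -> ledge),
    (forall e e', incident e x -> incident e' x -> phi e = phi e' -> e = e') /\
    (forall v, exists e, incident e x /\ phi e = v) /\
    (forall f i f' i', corner_at x f i -> corner_at x f' i' ->
        psi f i = psi f' i' -> f = f' /\ i = i') /\
    (forall a, exists f i, corner_at x f i /\ psi f i = a) /\
    (forall f i, corner_at x f i ->
        ((phi (corner_e1 f i), phi (corner_e2 f i)) = ledge_ends (psi f i) \/
         (phi (corner_e2 f i), phi (corner_e1 f i)) = ledge_ends (psi f i)) /\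
        corner_label f i = ledge_label (psi f i)).

Definition brady_complex : Prop :=
  well_formed /\ simply_connected /\ forall x, link_is_ladder x.

Definition face_has_edge (f : face X) (e : edge X) : Prop :=
  exists i, i < fsize f /\ fedge f i = e.
Definition face_has_vert (f : face X) (x : vert X) : Prop :=
  exists i, i < fsize f /\ fvert f i = x.

Definition link_single_cycle (S : face X -> Prop) (x : vert X) : Prop :=
  exists (m : nat) (es : nat -> edge X) (cs : nat -> (face X * nat)%type),
    3 <= m /\
    (forall j k, j < m -> k < m -> es j = es k -> j = k) /\
    (forall j k, j < m -> k < m -> cs j = cs k -> j = k) /\
    (forall j, j < m -> corner_at x (cs j).1 (cs j).2 /\ S (cs j).1 /\
                        corner_joins (cs j).1 (cs j).2 (es j) (es (j.+1 %% m))) /\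
    (forall f i, corner_at x f i -> S f -> exists j, j < m /\ cs j = (f, i)).

Definition hamiltonian_surface (S : face X -> Prop) : Prop :=
  (forall f g, S f -> S g ->
     clos_refl_trans _ (fun f' g' => S f' /\ S g' /\
        exists x, face_has_vert f' x /\ face_has_vert g' x) f g) /\
  (forall x, exists f, S f /\ face_has_vert f x) /\
  (forall e, exists f1 f2, f1 <> f2 /\ S f1 /\ S f2 /\
       face_has_edge f1 e /\ face_has_edge f2 e /\
       forall f, S f -> face_has_edge f e -> f = f1 \/ f = f2) /\
  (forall x, link_single_cycle S x).

Definition exactly_two_rungs (S : face X -> Prop) (x : vert X) : Prop :=
  exists f1 i1 f2 i2, (f1, i1) <> (f2, i2) /\
    corner_at x f1 i1 /\ S f1 /\ corner_label f1 i1 = lab_L /\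
    corner_at x f2 i2 /\ S f2 /\ corner_label f2 i2 = lab_L /\
    forall f i, corner_at x f i -> S f -> corner_label f i = lab_L ->
      (f, i) = (f1, i1) \/ (f, i) = (f2, i2).

End Complex.

From Stdlib Require Import Relations.
From mathcomp Require Import all_boot.
From HB Require Import structures.
Set Implicit Arguments. Unset Strict Implicit. Unset Printing Implicit Defensive.

(* At every vertex the corners of the faces of a Hamiltonian surface form a
   Hamiltonian cycle of the link, a Moebius ladder. Enumerating these cycles
   shows that each uses either no rung or exactly two, and that each obeys two
   local rules: the link edges it misses form a matching, and if it misses the
   l-edge at a link vertex then it also misses the rung at the far end of the
   t-edge there.
   So it suffices to exclude a vertex x whose link cycle uses no rung. Take a
   triangle x a1 a2. The lozenge with its 2pi/3 corner at x along x a1 is not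
   in the surface (no rung at x), so at a1 its pi/3 corner is missing; the
   second rule at a1 says that the lozenge h with its 2pi/3 corner at a1 along
   a1 a2 is missing, hence so is the pi/3 corner of h at a2. Starting from x a2
   instead, the lozenge with its 2pi/3 corner at a2 along a1 a2 is missing.
   These are two different missing link edges at the same link vertex of a2,
   against the first rule. *)

Definition lvert_code (v : lvert) : nat :=
  match v with u0 => 0 | u1 => 1 | u2 => 2 | u3 => 3 | w0 => 4 | w1 => 5 | w2 => 6 | w3 => 7 end.
Lemma lvert_code_inj : injective lvert_code. Proof. by do 2 case. Qed.
HB.instance Definition _ := Equality.copy lvert (inj_type lvert_code_inj).

Definition ledge_code (a : ledge) : nat :=
  match a with
  | rung0 => 0 | rung1 => 1 | rung2 => 2 | rung3 => 3 | hl0 => 4 | hl1 => 5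
  | hl2 => 6 | hl3 => 7 | ht0 => 8 | ht1 => 9 | ht2 => 10 | ht3 => 11
  end.
Lemma ledge_code_inj : injective ledge_code. Proof. by do 2 case. Qed.
HB.instance Definition _ := Equality.copy ledge (inj_type ledge_code_inj).

Definition label_code (b : label) : nat := match b with lab_t => 0 | lab_l => 1 | lab_L => 2 end.
Lemma label_code_inj : injective label_code. Proof. by do 2 case. Qed.
HB.instance Definition _ := Equality.copy label (inj_type label_code_inj).

Definition lverts := [:: u0; u1; u2; u3; w0; w1; w2; w3].
Definition ledges := [:: rung0; rung1; rung2; rung3; hl0; hl1; hl2; hl3; ht0; ht1; ht2; ht3].
Lemma mem_lverts v : v \in lverts. Proof. by case: v. Qed.
Lemma mem_ledges a : a \in ledges. Proof. by case: a. Qed.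

Definition ledge_at (v : lvert) (a : ledge) : bool :=
  ((ledge_ends a).1 == v) || ((ledge_ends a).2 == v).

Definition ledge_joins (a : ledge) (v v' : lvert) : bool :=
  (ledge_ends a == (v, v')) || (ledge_ends a == (v', v)).

(* rung0 when v and v' are not adjacent *)
Definition ledge_between (v v' : lvert) : ledge :=
  nth rung0 [seq a <- ledges | ledge_joins a v v'] 0.

Definition ladder_adj (v v' : lvert) : bool := has (fun a => ledge_joins a v v') ledges.

Fixpoint ladder_walks (n : nat) (v : lvert) : seq (seq lvert) :=
  if n is n'.+1 then
    flatten [seq map (cons v') (ladder_walks n' v') | v' <- lverts & ladder_adj v v']
  else [:: [::]].

(* Each Hamiltonian cycle is listed once per starting vertex and orientation. *)
Definition ladder_ham_cycles : seq (seq lvert) :=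
  [seq v :: p | v <- lverts,
                p <- [seq p <- ladder_walks 7 v | uniq (v :: p) && ladder_adj (last v p) v]].

Definition ladder_cycle (ps : seq lvert) : seq ledge :=
  [seq ledge_between (nth u0 ps j) (nth u0 ps (j.+1 %% 8)) | j <- iota 0 8].

Definition cycle_rungs (ps : seq lvert) : seq ledge :=
  [seq a <- ladder_cycle ps | ledge_label a == lab_L].

Lemma ledge_joinsC a v v' : ledge_joins a v v' = ledge_joins a v' v.
Proof. by rewrite /ledge_joins orbC. Qed.

Lemma ledge_joins_at a v v' w : ledge_joins a v v' -> ledge_at w a = (w == v) || (w == v').
Proof.
rewrite /ledge_joins /ledge_at; case: (ledge_ends a) => p q /=.
by case/orP => /eqP[-> ->] /=; rewrite !(eq_sym _ w) // orbC.
Qed.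

Lemma ledge_betweenP a v v' : ledge_joins a v v' -> ledge_between v v' = a.
Proof.
have : all (fun a => all (fun v => all (fun v' =>
         ledge_joins a v v' ==> (ledge_between v v' == a)) lverts) lverts) ledges.
  by vm_compute.
move/allP/(_ a (mem_ledges a))/allP/(_ v (mem_lverts v))/allP/(_ v' (mem_lverts v')).
by move/implyP => H /H/eqP.
Qed.

Lemma ledge_joins_adj a v v' : ledge_joins a v v' -> ladder_adj v v'.
Proof. by move=> Ha; apply/hasP; exists a; first exact: mem_ledges. Qed.

Lemma exists_rung_at v : exists2 r, ledge_label r = lab_L & ledge_at v r.
Proof.
by case: v; first [by exists rung0 | by exists rung1 | by exists rung2 | by exists rung3].
Qed.

Lemma mem_ladder_walks n v p : size p = n -> path ladder_adj v p -> p \in ladder_walks n v.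
Proof.
elim: n v p => [|n IH] v [|v' p] // /succn_inj Hp /andP[Hadj Hpath].
apply/flatten_mapP; exists v'; first by rewrite mem_filter Hadj mem_lverts.
by rewrite map_f // IH.
Qed.

Lemma ladder_closed_walk m (P : nat -> lvert) (B : nat -> ledge) :
  (forall j k, j < m -> k < m -> P j = P k -> j = k) ->
  (forall v, exists2 j, j < m & P j = v) ->
  (forall j, j < m -> ledge_joins (B j) (P j) (P (j.+1 %% m))) ->
  exists2 ps, ps \in ladder_ham_cycles &
    forall a, a \in ladder_cycle ps <-> exists2 j, j < m & B j = a.
Proof.
move=> P_inj P_surj B_joins; pose ps := map P (iota 0 m).
have ps_uniq : uniq ps.
  rewrite map_inj_in_uniq ?iota_uniq // => j k.
  by rewrite !mem_iota => /andP[_ Hj] /andP[_ Hk]; apply: P_inj.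
have ps_perm : perm_eq ps lverts.
  apply: uniq_perm => // v; rewrite mem_lverts.
  by have [j Hj <-] := P_surj v; rewrite map_f // mem_iota.
have m8 : m = 8 by have := perm_size ps_perm; rewrite size_map size_iota.
subst m.
have P_adj j : j < 7 -> ladder_adj (P j) (P j.+1).
  by move=> Hj; have := B_joins j (leqW Hj); rewrite modn_small // => /ledge_joins_adj.
have nth_ps j : j < 8 -> nth u0 ps j = P j.
  by move=> Hj; rewrite (nth_map 0) ?size_iota ?nth_iota.
have ps_edge j : j < 8 -> ledge_between (nth u0 ps j) (nth u0 ps (j.+1 %% 8)) = B j.
  by move=> Hj; rewrite !nth_ps ?ltn_pmod //; apply/ledge_betweenP/B_joins.
exists ps.
  have -> : ps = P 0 :: map P (iota 1 7) by [].
  apply: allpairs_f_dep; first exact: mem_lverts.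
  rewrite mem_filter ps_uniq (ledge_joins_adj (B_joins 7 isT)).
  by apply: mem_ladder_walks; rewrite //= !P_adj.
move=> a; split.
  by case/mapP => j; rewrite mem_iota => /andP[_ Hj] ->; exists j; rewrite ?ps_edge.
by case=> j Hj <-; apply/mapP; exists j; rewrite ?mem_iota ?ps_edge.
Qed.

Lemma ham_cycle_complement_matching ps a a' v : ps \in ladder_ham_cycles ->
  a \notin ladder_cycle ps -> a' \notin ladder_cycle ps -> ledge_at v a -> ledge_at v a' ->
  a = a'.
Proof.
move=> Hps; have : all (fun C => all (fun a => all (fun a' => all (fun v =>
    [&& a \notin C, a' \notin C, ledge_at v a & ledge_at v a'] ==> (a == a'))
    lverts) ledges) ledges) (map ladder_cycle ladder_ham_cycles).
  by vm_compute.
move/allP/(_ _ (map_f ladder_cycle Hps))/allP/(_ a (mem_ledges a))/allP/(_ a' (mem_ledges a')).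
move/allP/(_ v (mem_lverts v))/implyP => H Ha Ha' Hv Hv'.
by apply/eqP/H; rewrite Ha Ha' Hv Hv'.
Qed.

Lemma ham_cycle_no_rung_after_gap ps a b c v v' : ps \in ladder_ham_cycles ->
  ledge_label a = lab_l -> ledge_label b = lab_t -> ledge_label c = lab_L ->
  ledge_at v a -> ledge_joins b v v' -> ledge_at v' c ->
  a \notin ladder_cycle ps -> c \notin ladder_cycle ps.
Proof.
pose with_label l := [seq a <- ledges | ledge_label a == l].
have mem_with_label d : d \in with_label (ledge_label d) by rewrite mem_filter eqxx mem_ledges.
move=> Hps; have : all (fun C => all (fun a => all (fun b => all (fun c =>
    all (fun v => all (fun v' =>
      [&& ledge_at v a, ledge_joins b v v', ledge_at v' c & a \notin C] ==> (c \notin C))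
    lverts) lverts) (with_label lab_L)) (with_label lab_t)) (with_label lab_l))
  (map ladder_cycle ladder_ham_cycles).
  by vm_compute.
move=> + La Lb Lc; rewrite -La -Lb -Lc.
move/allP/(_ _ (map_f ladder_cycle Hps))/allP/(_ a (mem_with_label a)).
move/allP/(_ b (mem_with_label b))/allP/(_ c (mem_with_label c)).
move/allP/(_ v (mem_lverts v))/allP/(_ v' (mem_lverts v'))/implyP => H Hv Hb Hc Ha.
by apply: H; rewrite Hv Hb Hc Ha.
Qed.

Lemma ham_cycle_rungs ps : ps \in ladder_ham_cycles ->
  cycle_rungs ps = [::] \/ exists r1 r2, r1 <> r2 /\ cycle_rungs ps = [:: r1; r2].
Proof.
move=> Hps; have : all (fun ps => if cycle_rungs ps is [:: r1; r2] then r1 != r2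
                                  else nilp (cycle_rungs ps)) ladder_ham_cycles.
  by vm_compute.
move/allP/(_ ps Hps); case: (cycle_rungs ps) => [|r1 [|r2 [|]]] //= H; first by left.
by right; exists r1, r2; split => //; apply/eqP.
Qed.

Section Complex.
Variable X : complex2.
Hypothesis WF : well_formed X.

Definition corner_on (f : face X) (i : nat) (e : edge X) : Prop :=
  corner_e1 f i = e \/ corner_e2 f i = e.

Definition corner_pred (f : face X) (i : nat) : nat := (i + fsize f).-1 %% fsize f.
Definition corner_succ (f : face X) (i : nat) : nat := i.+1 %% fsize f.

Lemma fsize_cases (f : face X) : fsize f = 3 \/ fsize f = 4.
Proof. by rewrite /fsize; case: (fshape f); [left|right]. Qed.

Lemma corner_pred_succ (f : face X) i : i < fsize f ->
  [/\ corner_pred f i < fsize f, corner_succ f (corner_pred f i) = i,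
      corner_pred f (corner_succ f i) = i & corner_succ f i < fsize f].
Proof.
by rewrite /corner_pred /corner_succ; case: (fsize_cases f) => ->; case: i => [|[|[|[|i]]]].
Qed.

Lemma odd_corner_pred_succ (f : face X) i : fshape f = Loz -> i < fsize f ->
  odd (corner_pred f i) = ~~ odd i /\ odd (corner_succ f i) = ~~ odd i.
Proof. by rewrite /corner_pred /corner_succ /fsize => ->; case: i => [|[|[|[|i]]]]. Qed.

Lemma joinsC (e : edge X) a b : joins e a b -> joins e b a.
Proof. by case; [right|left]. Qed.

Lemma joins_incident (e : edge X) a b : joins e a b -> incident e a.
Proof. by rewrite /incident; case=> [[-> _]|[_ ->]]; [left|right]. Qed.

Lemma joins_incident_eq (e : edge X) a b y : joins e a b -> incident e y -> y = a \/ y = b.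
Proof. by rewrite /joins /incident; case=> -[-> ->] [] <-; auto. Qed.

Lemma joins_other_end (e : edge X) a b c : joins e a b -> joins e a c -> b = c.
Proof.
have [/(_ e) ends_neq _] := WF.
by case=> -[E1 E2]; case=> -[E3 E4]; congruence.
Qed.

Lemma fedge_joins (f : face X) i : i < fsize f ->
  joins (fedge f i) (fvert f i) (fvert f (corner_succ f i)).
Proof. by have [_ [H _]] := WF; apply: H. Qed.

Lemma corner_e1_joins (f : face X) i : i < fsize f ->
  joins (corner_e1 f i) (fvert f i) (fvert f (corner_pred f i)).
Proof.
move=> Hi; have [Hp Hps _ _] := corner_pred_succ Hi.
by apply: joinsC; have := fedge_joins Hp; rewrite Hps.
Qed.

Lemma corner_e1_succ (f : face X) i : i < fsize f -> corner_e1 f (corner_succ f i) = fedge f i.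
Proof.
by move=> Hi; have [_ _ Hsp _] := corner_pred_succ Hi; rewrite /corner_e1 -/(corner_pred _ _) Hsp.
Qed.

Lemma corner_incident (y : vert X) f i e : corner_at y f i -> corner_on f i e -> incident e y.
Proof.
case=> Hi <- [] <-; first exact: joins_incident (corner_e1_joins Hi).
exact: joins_incident (fedge_joins Hi).
Qed.

Lemma face_edge_corner (y : vert X) f i : i < fsize f -> incident (fedge f i) y ->
  exists k, corner_at y f k /\ corner_on f k (fedge f i).
Proof.
move=> Hi /(joins_incident_eq (fedge_joins Hi)) [] ->; first by exists i; split => //; right.
have [_ _ _ Hs] := corner_pred_succ Hi.
by exists (corner_succ f i); split => //; left; apply: corner_e1_succ.
Qed.

Lemma corner_across_edge (g : face X) k y z e :
  corner_at y g k -> corner_on g k e -> joins e y z ->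
  exists k', [/\ corner_at z g k', corner_on g k' e & (fshape g = Loz -> odd k' = ~~ odd k)].
Proof.
case=> Hk <- He J; have [_ _ _ Hs] := corner_pred_succ Hk.
case: He J => <- J.
- exists (corner_pred g k); split.
  + by split; [case: (corner_pred_succ Hk) | apply: joins_other_end (corner_e1_joins Hk) J].
  + by right.
  + by move=> Lg; have [] := odd_corner_pred_succ Lg Hk.
- exists (corner_succ g k); split.
  + by split => //; apply: joins_other_end (fedge_joins Hk) J.
  + by left; apply: corner_e1_succ.
  + by move=> Lg; have [] := odd_corner_pred_succ Lg Hk.
Qed.

Lemma triangle_succ3 (f : face X) i : fshape f = Tri -> i < fsize f ->
  corner_succ f (corner_succ f (corner_succ f i)) = i.
Proof. by rewrite /corner_succ /fsize => ->; case: i => [|[|[|]]]. Qed.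

Lemma triangle_sides (x : vert X) f i : corner_at x f i -> fshape f = Tri ->
  exists a1 a2 e1 e2 e3, [/\ joins e1 x a1, joins e2 x a2, joins e3 a1 a2,
    (exists2 j, corner_at a1 f j & corner_joins f j e1 e3) &
    (exists2 j, corner_at a2 f j & corner_joins f j e2 e3)].
Proof.
case=> Hi <- Tf; pose j := corner_succ f i; pose k := corner_succ f j.
have [_ _ _ Hj] := corner_pred_succ Hi; have [_ _ _ Hk] := corner_pred_succ Hj.
exists (fvert f j), (fvert f k), (fedge f i), (fedge f k), (fedge f j); split.
- exact: fedge_joins.
- by apply: joinsC; have := fedge_joins Hk; rewrite triangle_succ3.
- exact: fedge_joins.
- by exists j => //; left; rewrite corner_e1_succ.
- by exists k => //; right; rewrite corner_e1_succ.
Qed.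

Lemma corner_joins_on (f : face X) i e e' :
  corner_joins f i e e' -> corner_on f i e /\ corner_on f i e'.
Proof. by rewrite /corner_on; case=> -[-> ->]; split; auto. Qed.

Lemma corner_label_t (f : face X) i : corner_label f i = lab_t -> fshape f = Tri.
Proof. by rewrite /corner_label; case: (fshape f) => //; case: (odd i). Qed.

Lemma corner_label_tri (f : face X) i : fshape f = Tri -> corner_label f i = lab_t.
Proof. by rewrite /corner_label => ->. Qed.

Lemma corner_label_L (f : face X) i : corner_label f i = lab_L -> fshape f = Loz /\ odd i.
Proof. by rewrite /corner_label; case: (fshape f) => //; case: (odd i). Qed.

Lemma rung_across_edge (g : face X) k y z e :
  corner_at y g k -> corner_label g k = lab_L -> corner_on g k e -> joins e y z ->
  exists k', [/\ corner_at z g k', corner_label g k' = lab_l & corner_on g k' e].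
Proof.
move=> Hk /corner_label_L[Lg odd_k] He J.
have [k' [Hk' He' odd_k']] := corner_across_edge Hk He J.
by exists k'; split => //; rewrite /corner_label Lg odd_k' // odd_k.
Qed.

Record ladder_iso (y : vert X) (phi : edge X -> lvert) (psi : face X -> nat -> ledge) : Prop :=
  LadderIso {
    ladder_phi_inj : forall e e', incident e y -> incident e' y -> phi e = phi e' -> e = e';
    ladder_phi_surj : forall v, exists e, incident e y /\ phi e = v;
    ladder_psi_inj : forall f i f' i', corner_at y f i -> corner_at y f' i' ->
      psi f i = psi f' i' -> f = f' /\ i = i';
    ladder_psi_surj : forall a, exists f i, corner_at y f i /\ psi f i = a;
    ladder_psi_corner : forall f i, corner_at y f i ->
      ledge_joins (psi f i) (phi (corner_e1 f i)) (phi (corner_e2 f i)) /\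
      corner_label f i = ledge_label (psi f i)
  }.

Lemma link_ladder_iso y : link_is_ladder y -> exists phi psi, ladder_iso y phi psi.
Proof.
case=> phi [psi [phi_inj [phi_surj [psi_inj [psi_surj psi_corner]]]]].
exists phi, psi; split => // f i /psi_corner[E ->]; split => //.
by rewrite /ledge_joins; case: E => <-; rewrite eqxx ?orbT.
Qed.

Section Link.
Variables (y : vert X) (phi : edge X -> lvert) (psi : face X -> nat -> ledge).
Hypothesis HL : ladder_iso y phi psi.

Lemma corner_ledge_joins f i e e' :
  corner_at y f i -> corner_joins f i e e' -> ledge_joins (psi f i) (phi e) (phi e').
Proof.
move=> /(ladder_psi_corner HL)[E _].
by case=> -[<- <-]; rewrite // ledge_joinsC.
Qed.

Lemma corner_ledge_at f i e : corner_at y f i -> corner_on f i e -> ledge_at (phi e) (psi f i).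
Proof.
move=> Hc He; have [E _] := ladder_psi_corner HL Hc.
by rewrite (ledge_joins_at _ E); case: He => <-; rewrite eqxx ?orbT.
Qed.

Lemma corner_of_ledge e a : incident e y -> ledge_at (phi e) a ->
  exists f i, [/\ corner_at y f i, psi f i = a & corner_on f i e].
Proof.
move=> He; have [f [i [Hc <-]]] := ladder_psi_surj HL a; move=> Ha.
exists f, i; split => //; have [E _] := ladder_psi_corner HL Hc.
have [He1 He2] : incident (corner_e1 f i) y /\ incident (corner_e2 f i) y.
  by split; apply: corner_incident Hc _; [left|right].
rewrite (ledge_joins_at _ E) in Ha.
by case/orP: Ha => /eqP/(ladder_phi_inj HL He) E'; [left|right]; rewrite E'.
Qed.

Lemma rung_corner e : incident e y ->
  exists f i, [/\ corner_at y f i, corner_label f i = lab_L & corner_on f i e].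
Proof.
move=> He; have [r Lr Hr] := exists_rung_at (phi e).
have [f [i [Hc Er He']]] := corner_of_ledge He Hr.
by exists f, i; split => //; have [_ ->] := ladder_psi_corner HL Hc; rewrite Er.
Qed.

Variable S : face X -> Prop.
Hypothesis HS : hamiltonian_surface S.

Lemma surface_link_ham_cycle :
  exists2 ps, ps \in ladder_ham_cycles &
    forall f i, corner_at y f i -> (S f <-> psi f i \in ladder_cycle ps).
Proof.
have [_ [_ [S_edges S_links]]] := HS.
have [m [es [cs [m_ge3 [es_inj [_ [cs_cycle cs_cover]]]]]]] := S_links y.
have m_gt0 : 0 < m by apply: leq_trans m_ge3.
have es_at j : j < m -> incident (es j) y.
  move=> Hj; have [Hc [_ /corner_joins_on[He _]]] := cs_cycle j Hj.
  exact: corner_incident Hc He.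
have es_onto f i e : corner_at y f i -> S f -> corner_on f i e -> exists2 j, j < m & es j = e.
  move=> Hc Sf He; have [j [Hj Ej]] := cs_cover f i Hc Sf.
  have [_ [_ Hjoin]] := cs_cycle j Hj; rewrite Ej /= in Hjoin.
  have Hj1 : j.+1 %% m < m by rewrite ltn_pmod.
  by case: Hjoin => -[E1 E2]; case: He => <-;
    [exists j | exists (j.+1 %% m) | exists (j.+1 %% m) | exists j]; rewrite ?E1 ?E2.
have P_inj j k : j < m -> k < m -> phi (es j) = phi (es k) -> j = k.
  by move=> Hj Hk /(ladder_phi_inj HL (es_at j Hj) (es_at k Hk)); apply: es_inj.
have P_surj v : exists2 j, j < m & phi (es j) = v.
  have [e [He <-]] := ladder_phi_surj HL v.
  have [f [_ [_ [Sf [_ [[i [Hi Hfe]] _]]]]]] := S_edges e.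
  rewrite -Hfe in He *; have [k [Hk Hek]] := face_edge_corner Hi He.
  by have [j Hj <-] := es_onto f k _ Hk Sf Hek; exists j.
have B_joins j : j < m -> ledge_joins (psi (cs j).1 (cs j).2) (phi (es j)) (phi (es (j.+1 %% m))).
  by move=> Hj; have [Hc [_ Hjoin]] := cs_cycle j Hj; apply: corner_ledge_joins.
have [ps Hps Hcycle] := ladder_closed_walk P_inj P_surj B_joins.
exists ps => // f i Hc; split => [Sf | /Hcycle[j Hj Ej]].
  by apply/Hcycle; have [j [Hj Ej]] := cs_cover f i Hc Sf; exists j; rewrite ?Ej.
have [Hcj [Sj _]] := cs_cycle j Hj.
by have [<- _] := ladder_psi_inj HL Hcj Hc Ej.
Qed.

Lemma surface_rungsP ps :
  (forall f i, corner_at y f i -> (S f <-> psi f i \in ladder_cycle ps)) ->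
  forall f i, corner_at y f i -> (S f /\ corner_label f i = lab_L <-> psi f i \in cycle_rungs ps).
Proof.
move=> HSps f i Hc; have [_ ->] := ladder_psi_corner HL Hc; rewrite mem_filter.
by split => [[/(HSps _ _ Hc) -> ->] | /andP[/eqP -> /(HSps _ _ Hc)]].
Qed.

End Link.

End Complex.

Section Surface.
Variable X : complex2.
Hypothesis WF : well_formed X.
Hypothesis links : forall y : vert X, link_is_ladder y.
Variable S : face X -> Prop.
Hypothesis HS : hamiltonian_surface S.

Lemma rung_corner_at (y : vert X) e : incident e y ->
  exists f i, [/\ corner_at y f i, corner_label f i = lab_L & corner_on f i e].
Proof.
have [phi [psi HL]] := link_ladder_iso (links y).
by move=> He; exact: (rung_corner WF HL He).
Qed.

Lemma missing_corner_on_edge_unique (y : vert X) f i g k e :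
  corner_at y f i -> corner_at y g k -> ~ S f -> ~ S g -> corner_on f i e -> corner_on g k e ->
  f = g /\ i = k.
Proof.
move=> Hf Hg Sf Sg Hfe Hge.
have [phi [psi HL]] := link_ladder_iso (links y).
have [ps Hps HSps] := surface_link_ham_cycle WF HL HS.
apply: (ladder_psi_inj HL Hf Hg).
apply: (ham_cycle_complement_matching Hps _ _ (corner_ledge_at HL Hf Hfe)
                                                (corner_ledge_at HL Hg Hge)).
- by apply/negP => /(HSps _ _ Hf).
- by apply/negP => /(HSps _ _ Hg).
Qed.

Lemma rung_missing_across_triangle (y : vert X) g k f i h l e e' :
  corner_at y g k -> corner_label g k = lab_l -> corner_on g k e -> ~ S g ->
  corner_at y f i -> fshape f = Tri -> corner_joins f i e e' ->
  corner_at y h l -> corner_label h l = lab_L -> corner_on h l e' -> ~ S h.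
Proof.
move=> Hg Lg Hge Sg Hf Tf Hfj Hh Lh Hhe Sh.
have [phi [psi HL]] := link_ladder_iso (links y).
have [ps Hps HSps] := surface_link_ham_cycle WF HL HS.
have label_psi c n : corner_at y c n -> ledge_label (psi c n) = corner_label c n.
  by move/(ladder_psi_corner HL) => [_ ->].
have gap : psi g k \notin ladder_cycle ps by apply/negP => /(HSps _ _ Hg).
have := ham_cycle_no_rung_after_gap Hps
  (etrans (label_psi _ _ Hg) Lg) (etrans (label_psi _ _ Hf) (corner_label_tri i Tf))
  (etrans (label_psi _ _ Hh) Lh) (corner_ledge_at HL Hg Hge) (corner_ledge_joins HL Hf Hfj)
  (corner_ledge_at HL Hh Hhe) gap.
by move/negP; apply; apply/(HSps _ _ Hh).
Qed.

Lemma surface_link_has_rung (x : vert X) :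
  ~ (forall f i, corner_at x f i -> S f -> corner_label f i <> lab_L).
Proof.
move=> no_rung; have [phi [psi HL]] := link_ladder_iso (links x).
have [f [i [Hc Ef]]] := ladder_psi_surj HL ht0.
have Tf : fshape f = Tri.
  by apply: (@corner_label_t _ _ i); have [_ ->] := ladder_psi_corner HL Hc; rewrite Ef.
have [a1 [a2 [e1 [e2 [e3 [J1 J2 J3 [j1 Hj1 Hf1] [j2 Hj2 Hf2]]]]]]] := triangle_sides WF Hc Tf.
have far_gap e a : joins e x a ->
    exists g k, [/\ corner_at a g k, corner_label g k = lab_l, corner_on g k e & ~ S g].
  move=> J; have [g [k [Hg Lg Hge]]] := rung_corner_at (joins_incident J).
  have [k' [Hg' Lg' Hge']] := rung_across_edge WF Hg Lg Hge J.
  by exists g, k'; split => // Sg; apply: no_rung Hg Sg Lg.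
have [g1 [k1 [Hg1 Lg1 Hge1 Sg1]]] := far_gap e1 a1 J1.
have [g2 [k2 [Hg2 Lg2 Hge2 Sg2]]] := far_gap e2 a2 J2.
have [h1 [l1 [Hh1 Lh1 Hhe1]]] := rung_corner_at (joins_incident J3).
have [h2 [l2 [Hh2 Lh2 Hhe2]]] := rung_corner_at (joins_incident (joinsC J3)).
have Sh1 := rung_missing_across_triangle Hg1 Lg1 Hge1 Sg1 Hj1 Tf Hf1 Hh1 Lh1 Hhe1.
have Sh2 := rung_missing_across_triangle Hg2 Lg2 Hge2 Sg2 Hj2 Tf Hf2 Hh2 Lh2 Hhe2.
have [l1' [Hh1' Lh1' Hhe1']] := rung_across_edge WF Hh1 Lh1 Hhe1 J3.
have [Eh El] := missing_corner_on_edge_unique Hh1' Hh2 Sh1 Sh2 Hhe1' Hhe2.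
by move: Lh1'; rewrite Eh El Lh2.
Qed.

End Surface.

Theorem mainTheorem4 (X : complex2) (HX : brady_complex X)
  (S : face X -> Prop) (HS : hamiltonian_surface S) (x : vert X) :
  exactly_two_rungs S x.
Proof.
have [WF [_ links]] := HX.
have [phi [psi HL]] := link_ladder_iso (links x).
have [ps Hps HSps] := surface_link_ham_cycle WF HL HS.
have rungP := surface_rungsP HL HSps.
case: (ham_cycle_rungs Hps) => [no_rungs | [r1 [r2 [r12 rungs12]]]].
  exfalso; apply: (@surface_link_has_rung _ WF links _ HS x) => f i Hc Sf Lf.
  by have := (rungP f i Hc).1 (conj Sf Lf); rewrite no_rungs.
have rung_of r : r \in cycle_rungs ps ->
    exists f i, [/\ corner_at x f i, psi f i = r, S f & corner_label f i = lab_L].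
  move=> Hr; have [f [i [Hc Er]]] := ladder_psi_surj HL r.
  by move: Hr; rewrite -Er => /(rungP f i Hc)[]; exists f, i.
have /rung_of[f1 [i1 [C1 E1 S1 L1]]] : r1 \in cycle_rungs ps by rewrite rungs12 mem_head.
have /rung_of[f2 [i2 [C2 E2 S2 L2]]] : r2 \in cycle_rungs ps.
  by rewrite rungs12 !inE eqxx orbT.
exists f1, i1, f2, i2; split; first by case=> E E'; apply: r12; rewrite -E1 -E2 E E'.
do 6!split => //; move=> f i Hc Sf Lf.
move: ((rungP f i Hc).1 (conj Sf Lf)); rewrite rungs12 !inE => /orP[] /eqP E.
- by left; have [-> ->] := ladder_psi_inj HL Hc C1 (etrans E (esym E1)).
- by right; have [-> ->] := ladder_psi_inj HL Hc C2 (etrans E (esym E2)).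
Qed.
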